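(* Let $G_{FL}=(\omega^{<\omega},c_{00}(\omega))$. For all finite games $A$ and $B$, every game embedding $g\colon A\to B$ and every game embedding $f\colon A\to G_{FL}$, there is a game embedding $h\colon B\to G_{FL}$ with $h\circ g=f$. (That is, $G_{FL}$ is injective, in the category of games with game embeddings, with respect to all game embeddings between finite games.)
   Context: For a set $M$, $M^{<\omega}=\bigcup_{n<\omega}M^n$ is the set of finite sequences in $M$; $|t|$ denotes the length of $t$, $t\restriction k$ its initial segment of length $k$, $t^\frown x$ the extension of $t$ by the element $x$, and $\langle\rangle$ the empty sequence. A game tree is a set $T\subseteq M^{<\omega}$ (for some set $M$) such that (i) if $t\in T$ and $k\le |t|$ then $t\restriction k\in T$, and (ii) for every $t\in T$ there is $x$ with $t^\frown x\in T$. $\mathrm{Run}(T)=\{R\in M^\omega: R\restriction n\in T\text{ for all }n<\omega\}$. A game is a pair $G=(T,A)$ with $T$ a game tree and $A\subseteq\mathrm{Run}(T)$ (runs in $A$ are won by Alice, the other runs by Bob). A game $(T,A)$ is finite if $\mathrm{Run}(T)$ is finite. A map $f\colon T_1\to T_2$ between game trees is chronological if $|f(t)|=|t|$ and $f(t\restriction k)=f(t)\restriction k$ for all $t\in T_1$, $k\le|t|$; it induces $\bar f\colon\mathrm{Run}(T_1)\to\mathrm{Run}(T_2)$ with $\bar f(R)\restriction n=f(R\restriction n)$. For games $G_i=(T_i,A_i)$, a chronological $f\colon T_1\to T_2$ is an A-morphism $G_1\to G_2$ if $\bar f[A_1]\subseteq A_2$, a B-morphism if $\bar f[\mathrm{Run}(T_1)\setminus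 A_1]\subseteq \mathrm{Run}(T_2)\setminus A_2$, and a game embedding if it is injective and both an A-morphism and a B-morphism. $c_{00}(\omega)$ denotes the set of eventually zero sequences in $\omega^\omega$; note $\mathrm{Run}(\omega^{<\omega})=\omega^\omega$. *)

From Stdlib Require Import List Arith.
Import ListNotations.
Set Implicit Arguments.

Definition prefix {M : Type} (R : nat -> M) (n : nat) : list M :=
  map R (seq 0 n).

Definition is_game_tree {M : Type} (T : list M -> Prop) : Prop :=
  (forall t k, T t -> k <= length t -> T (firstn k t)) /\
  (forall t, T t -> exists x, T (t ++ [x])).

Definition Run {M : Type} (T : list M -> Prop) (R : nat -> M) : Prop :=
  forall n, T (prefix R n).

Record Game := {
  gM : Type;
  gT : list gM -> Prop;
  gA : (nat -> gM) -> Prop;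
  gT_tree : is_game_tree gT;
  gA_runs : forall R, gA R -> Run gT R
}.

Definition finite_game (G : Game) : Prop :=
  exists l : list (nat -> gM G),
    forall R, Run (gT G) R -> exists R', In R' l /\ forall n, R n = R' n.

Definition chronological (G1 G2 : Game) (f : list (gM G1) -> list (gM G2)) : Prop :=
  forall t, gT G1 t ->
    gT G2 (f t) /\ length (f t) = length t /\
    forall k, k <= length t -> f (firstn k t) = firstn k (f t).

Definition induced_run {M1 M2 : Type} (f : list M1 -> list M2)
  (R : nat -> M1) (S : nat -> M2) : Prop :=
  forall n, prefix S n = f (prefix R n).

Definition A_morphism (G1 G2 : Game) (f : list (gM G1) -> list (gM G2)) : Prop :=
  chronological G1 G2 f /\
  forall R S, Run (gT G1) R -> induced_run f R S -> gA G1 R -> gA G2 S.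

Definition B_morphism (G1 G2 : Game) (f : list (gM G1) -> list (gM G2)) : Prop :=
  chronological G1 G2 f /\
  forall R S, Run (gT G1) R -> induced_run f R S -> ~ gA G1 R -> ~ gA G2 S.

Definition game_embedding (G1 G2 : Game) (f : list (gM G1) -> list (gM G2)) : Prop :=
  chronological G1 G2 f /\
  (forall s t, gT G1 s -> gT G1 t -> f s = f t -> s = t) /\
  A_morphism G1 G2 f /\ B_morphism G1 G2 f.

Definition c00 (R : nat -> nat) : Prop :=
  exists N, forall n, N <= n -> R n = 0.

Lemma full_tree_is_game_tree : is_game_tree (fun _ : list nat => True).
Proof. split; [auto | intros t _; exists 0; exact I]. Qed.

Lemma c00_runs : forall R, c00 R -> Run (fun _ : list nat => True) R.
Proof. intros R _ n; exact I. Qed.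

Definition G_FL : Game :=
  {| gM := nat; gT := fun _ => True; gA := c00;
     gT_tree := full_tree_is_game_tree; gA_runs := c00_runs |}.

From Stdlib Require Import List Arith Lia Classical ClassicalEpsilon FunctionalExtensionality.
Import ListNotations.

(* Extend f along g by labelling every node u of B with a natural number and letting h u be
   the list of labels of the nonempty prefixes of u.  A node g s gets the last entry of f s,
   so that h (g s) = f s.  A node outside the image whose parent is in the image, or which has
   depth at most N, gets a number above every label f produces at its depth, shifted by the
   index of a run through it; N is chosen so that the finitely many runs of B are pairwise
   distinct already at depth N.  Distinct siblings thus get distinct labels, so h is injective.
   Every remaining node lies deeper than N on a single run and is labelled 0 if Alice wins that
   run and 1 otherwise.  Hence a run of B that leaves the image of g is sent into c00 exactly
   when Alice wins it, while a run inside the image lifts to a run of A and inherits its outcome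
   through the embeddings g and f. *)

Section Prefixes.
Context {M : Type}.

Lemma prefix_length (R : nat -> M) n : length (prefix R n) = n.
Proof. unfold prefix. now rewrite length_map, length_seq. Qed.

Lemma nth_prefix (R : nat -> M) n i d : i < n -> nth i (prefix R n) d = R i.
Proof.
  intros Hi. unfold prefix.
  rewrite nth_indep with (d' := R 0) by (rewrite length_map, length_seq; lia).
  now rewrite map_nth, seq_nth.
Qed.

Lemma prefix_S (R : nat -> M) n : prefix R (S n) = prefix R n ++ [R n].
Proof. unfold prefix. now rewrite seq_S, map_app. Qed.

Lemma prefix_eq_intro (R : nat -> M) n (l : list M) d :
  length l = n -> (forall i, i < n -> nth i l d = R i) -> prefix R n = l.
Proof.
  intros Hl Hnth. apply nth_ext with (d := d) (d' := d).
  - now rewrite prefix_length.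
  - intros i Hi. rewrite prefix_length in Hi. rewrite nth_prefix, Hnth; trivial.
Qed.

Lemma firstn_prefix (R : nat -> M) k n : k <= n -> firstn k (prefix R n) = prefix R k.
Proof.
  intros Hk. symmetry. apply prefix_eq_intro with (d := R 0).
  - rewrite length_firstn, prefix_length. lia.
  - intros i Hi. rewrite nth_firstn, nth_prefix by lia.
    now replace (i <? k) with true by (symmetry; apply Nat.ltb_lt; lia).
Qed.

Lemma prefix_eq_le (R1 R2 : nat -> M) k n :
  k <= n -> prefix R1 n = prefix R2 n -> prefix R1 k = prefix R2 k.
Proof. intros Hk E. now rewrite <- (firstn_prefix R1 k n), E, firstn_prefix. Qed.

Lemma prefix_separates (a : nat -> M) (l : list (nat -> M)) :
  exists N, forall b, In b l -> prefix a N = prefix b N -> a = b.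
Proof.
  induction l as [|b0 l [N HN]]; [exists 0; intros b []|].
  destruct (classic (a = b0)) as [<-|Hne].
  - exists N. intros b [<-|Hb] E; auto.
  - destruct (not_all_ex_not _ _ (fun H => Hne (functional_extensionality _ _ H))) as [n Hn].
    exists (Nat.max N (S n)). intros b [<-|Hb] E.
    + exfalso. apply Hn.
      now rewrite <- (nth_prefix a (Nat.max N (S n)) n (a n)), E, nth_prefix by lia.
    + apply HN; trivial. apply (prefix_eq_le _ _ _ _ (Nat.le_max_l N (S n)) E).
Qed.

Lemma prefix_separates_list (l : list (nat -> M)) :
  exists N, forall a b, In a l -> In b l -> prefix a N = prefix b N -> a = b.
Proof.
  induction l as [|a0 l [N HN]]; [exists 0; intros a b []|].
  destruct (prefix_separates a0 l) as [N0 HN0].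
  exists (Nat.max N N0). intros a b Ha Hb E.
  pose proof (prefix_eq_le _ _ _ _ (Nat.le_max_l N N0) E) as E1.
  pose proof (prefix_eq_le _ _ _ _ (Nat.le_max_r N N0) E) as E0.
  destruct Ha as [<-|Ha], Hb as [<-|Hb]; auto.
  symmetry. auto.
Qed.

Lemma coherent_chain_limit (s : nat -> list M) :
  (forall n, length (s n) = n) -> (forall n k, n <= k -> firstn n (s k) = s n) ->
  exists R, forall n, prefix R n = s n.
Proof.
  intros Hlen Hcoh. destruct (s 1) as [|d rest] eqn:E1; [now specialize (Hlen 1); rewrite E1 in Hlen|].
  exists (fun i => nth i (s (S i)) d). intros n.
  apply prefix_eq_intro with (d := d); [apply Hlen|]. intros i Hi.
  rewrite <- (Hcoh (S i) n) by lia. rewrite nth_firstn.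
  now replace (i <? S i) with true by (symmetry; apply Nat.ltb_lt; lia).
Qed.

End Prefixes.

Lemma firstn_app_l {M : Type} n (l w : list M) : n <= length l -> firstn n (l ++ w) = firstn n l.
Proof. intros Hn. rewrite firstn_app. now replace (n - length l) with 0 by lia; rewrite app_nil_r. Qed.

Lemma firstn_snoc {M : Type} (u : list M) x : firstn (length u) (u ++ [x]) = u.
Proof. now rewrite firstn_app_l, firstn_all. Qed.

Section GameTrees.
Context {M : Type} {T : list M -> Prop} (HT : is_game_tree T).

Lemma game_tree_firstn t k : T t -> T (firstn k t).
Proof.
  intros Ht. destruct (le_lt_dec k (length t)).
  - now apply (proj1 HT).
  - now rewrite firstn_all2 by lia.
Qed.

Lemma game_tree_snoc u x : T (u ++ [x]) -> T u.
Proof. intros H. rewrite <- (firstn_snoc u x). now apply game_tree_firstn. Qed.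

Lemma game_tree_run_through t : T t -> exists R, Run T R /\ prefix R (length t) = t.
Proof.
  destruct HT as [_ Hext]. intros Ht. destruct (Hext t Ht) as [d _].
  pose (next u := epsilon (inhabits d) (fun x => T (u ++ [x]))).
  pose (path := fix path k := match k with 0 => t | S k => path k ++ [next (path k)] end).
  assert (Hpath : forall k, T (path k)).
  { induction k; simpl; trivial. exact (epsilon_spec _ _ (Hext _ IHk)). }
  assert (Hlen : forall k, length (path k) = length t + k).
  { induction k; simpl; [lia|]. rewrite length_app, IHk; simpl; lia. }
  assert (Hgrow : forall j k, j <= k -> exists w, path k = path j ++ w).
  { induction 1 as [|k _ [w Hw]]; [exists []; now rewrite app_nil_r|].
    exists (w ++ [next (path k)]). simpl. now rewrite Hw, app_assoc. }
  destruct (coherent_chain_limit (fun n => firstn n (path n))) as [R HR].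
  - intros n. rewrite length_firstn, Hlen. lia.
  - intros n k Hnk. destruct (Hgrow n k Hnk) as [w ->].
    rewrite firstn_firstn, Nat.min_l, firstn_app_l by (trivial || rewrite Hlen; lia). trivial.
  - exists R. split.
    + intros n. rewrite HR. now apply game_tree_firstn.
    + destruct (Hgrow 0 (length t) (Nat.le_0_l _)) as [w Hw].
      rewrite HR, Hw. simpl. now rewrite firstn_app_l, firstn_all.
Qed.

End GameTrees.

Section Embeddings.
Context {G1 G2 : Game} {f : list (gM G1) -> list (gM G2)}.

Lemma chronological_length : chronological G1 G2 f -> forall t, gT G1 t -> length (f t) = length t.
Proof. intros Hf t Ht. apply (Hf t Ht). Qed.

Lemma chronological_snoc : chronological G1 G2 f ->
  forall t a, gT G1 (t ++ [a]) -> exists z, f (t ++ [a]) = f t ++ [z].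
Proof.
  intros Hf t a Hta. destruct (Hf _ Hta) as [_ [Hlen Hfirst]].
  rewrite length_app in Hlen. simpl in Hlen.
  destruct (exists_last (l := f (t ++ [a]))) as [l [z Ez]];
    [intros E; rewrite E in Hlen; simpl in Hlen; lia|].
  exists z. rewrite Ez. f_equal.
  rewrite <- (firstn_snoc t a), Hfirst, Ez by (rewrite length_app; simpl; lia).
  rewrite Ez, length_app in Hlen. simpl in Hlen.
  replace (length t) with (length l) by lia. symmetry. apply firstn_snoc.
Qed.

Lemma embedding_wins_iff : game_embedding G1 G2 f ->
  forall R S, Run (gT G1) R -> induced_run f R S -> (gA G1 R <-> gA G2 S).
Proof.
  intros [_ [_ [[_ HA] [_ HB]]]] R S HR HS. split; [now apply HA|].
  intros HwS. apply NNPP. intros HwR. exact (HB R S HR HS HwR HwS).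
Qed.

Lemma embedding_lift_run : game_embedding G1 G2 f -> forall S,
  (forall n, exists t, gT G1 t /\ f t = prefix S n) ->
  exists R, Run (gT G1) R /\ induced_run f R S.
Proof.
  intros [Hch [Hinj _]] S Himg.
  pose (s n := epsilon (inhabits []) (fun t => gT G1 t /\ f t = prefix S n)).
  assert (Hs : forall n, gT G1 (s n) /\ f (s n) = prefix S n)
    by (intros n; exact (epsilon_spec _ _ (Himg n))).
  assert (Hlen : forall n, length (s n) = n).
  { intros n. destruct (Hs n) as [Hn En].
    now rewrite <- (chronological_length Hch _ Hn), En, prefix_length. }
  destruct (coherent_chain_limit s Hlen) as [R HR].
  - intros n k Hnk. destruct (Hs k) as [Hk Ek]. apply Hinj.
    + now apply game_tree_firstn; [apply gT_tree|].
    + apply Hs.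
    + rewrite (proj2 (proj2 (Hch _ Hk))), Ek, firstn_prefix by (rewrite ?Hlen; lia). symmetry; apply Hs.
  - exists R. split; intros n; rewrite HR; [apply Hs|symmetry; apply Hs].
Qed.

End Embeddings.

Section LabelMap.
Context {M : Type} (label : list M -> nat).

Definition label_map (u : list M) : list nat :=
  map (fun k => label (firstn (S k) u)) (seq 0 (length u)).

Lemma length_label_map u : length (label_map u) = length u.
Proof. unfold label_map. now rewrite length_map, length_seq. Qed.

Lemma label_map_snoc u x : label_map (u ++ [x]) = label_map u ++ [label (u ++ [x])].
Proof.
  unfold label_map. rewrite length_app, Nat.add_1_r, seq_S, map_app. f_equal.
  - apply map_ext_in. intros k Hk. apply in_seq in Hk. now rewrite firstn_app_l by lia.
  - cbn [map]. now rewrite firstn_all2 by (rewrite length_app; simpl; lia).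
Qed.

Lemma label_map_firstn u k : label_map (firstn k u) = firstn k (label_map u).
Proof.
  induction u as [|x u IH] using rev_ind; [now rewrite !firstn_nil|].
  destruct (le_lt_dec k (length u)).
  - rewrite label_map_snoc, !firstn_app_l by (rewrite ?length_label_map; trivial). apply IH.
  - rewrite !firstn_all2; trivial; rewrite ?length_label_map, length_app; simpl; lia.
Qed.

Lemma label_map_induced_run R Q :
  induced_run label_map R Q -> forall n, Q n = label (prefix R (S n)).
Proof.
  intros HRQ n. pose proof (HRQ (S n)) as E.
  rewrite !prefix_S, label_map_snoc, <- HRQ, <- (prefix_S R) in E.
  now apply app_inj_tail in E.
Qed.

Lemma label_map_inj (T : list M -> Prop) : is_game_tree T ->
  (forall u x y, T (u ++ [x]) -> T (u ++ [y]) -> label (u ++ [x]) = label (u ++ [y]) -> x = y) ->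
  forall s t, T s -> T t -> label_map s = label_map t -> s = t.
Proof.
  intros HT Hsib s. induction s as [|x s IH] using rev_ind; intros t Hs Ht E;
    pose proof (f_equal (@length nat) E) as Elen; rewrite !length_label_map in Elen.
  - symmetry. now apply length_zero_iff_nil.
  - destruct (exists_last (l := t)) as [t' [y ->]];
      [intros ->; rewrite length_app in Elen; simpl in Elen; lia|].
    rewrite !label_map_snoc in E. apply app_inj_tail in E as [E1 E2].
    assert (s = t') as <- by (apply IH; trivial; eapply game_tree_snoc; eauto).
    f_equal. f_equal. now apply (Hsib s).
Qed.

End LabelMap.

Lemma chronological_label_map (G : Game) (label : list (gM G) -> nat) :
  chronological G G_FL (label_map label).
Proof.
  intros t _. split; [exact I|]. split; [apply length_label_map|]. intros k _. apply label_map_firstn.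
Qed.

Lemma le_list_max (l : list nat) x : In x l -> x <= list_max l.
Proof. revert x. apply Forall_forall, list_max_le, le_n. Qed.

Lemma finite_game_runs (G : Game) : finite_game G -> exists l, forall R, Run (gT G) R -> In R l.
Proof.
  intros [l Hl]. exists l. intros R HR. destruct (Hl R HR) as [R' [HR' E]].
  now replace R with R' by (apply functional_extensionality; intros n; symmetry; apply E).
Qed.

Section Extension.
Variables (A B : Game) (g : list (gM A) -> list (gM B)) (f : list (gM A) -> list nat).
Hypotheses (Hg : game_embedding A B g) (Hf : game_embedding A G_FL f).
Variables (runsA : list (nat -> gM A)) (runsB : list (nat -> gM B)) (N : nat).
Hypothesis runsA_complete : forall R, Run (gT A) R -> In R runsA.
Hypothesis runsB_complete : forall R, Run (gT B) R -> In R runsB.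
Hypothesis runsB_separated :
  forall R1 R2, Run (gT B) R1 -> Run (gT B) R2 -> prefix R1 N = prefix R2 N -> R1 = R2.

Definition in_image (u : list (gM B)) : Prop := exists s, gT A s /\ g s = u.

Definition preimage (u : list (gM B)) : list (gM A) :=
  epsilon (inhabits []) (fun s => gT A s /\ g s = u).

Definition level_bound (m : nat) : nat :=
  list_max (map (fun R => last (f (prefix R m)) 0) runsA).

Definition run_index (u : list (gM B)) : nat :=
  epsilon (inhabits 0) (fun i => exists R, nth_error runsB i = Some R /\ prefix R (length u) = u).

Definition label (u : list (gM B)) : nat :=
  if excluded_middle_informative (in_image u) then last (f (preimage u)) 0
  else if excluded_middle_informative (in_image (removelast u) \/ length u <= N)
  then level_bound (length u) + 1 + run_index u
  else if excluded_middle_informative (exists R, Run (gT B) R /\ prefix R (length u) = u /\ gA B R)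
  then 0 else 1.

Lemma label_image s : gT A s -> label (g s) = last (f s) 0.
Proof.
  intros Hs. unfold label.
  destruct excluded_middle_informative as [Hi|Hni]; [|now exfalso; apply Hni; exists s].
  destruct (epsilon_spec (inhabits []) (fun t => gT A t /\ g t = g s) Hi) as [Hp Ep].
  unfold preimage. now rewrite ((proj1 (proj2 Hg)) _ _ Hp Hs Ep).
Qed.

Lemma label_map_extends t : gT A t -> label_map label (g t) = f t.
Proof.
  induction t as [|a t IH] using rev_ind; intros Ht.
  - pose proof (chronological_length (proj1 Hg) _ Ht) as Lg.
    pose proof (chronological_length (proj1 Hf) _ Ht) as Lf.
    apply length_zero_iff_nil in Lg, Lf. now rewrite Lg, Lf.
  - destruct (chronological_snoc (proj1 Hg) _ _ Ht) as [z Ez].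
    destruct (chronological_snoc (proj1 Hf) _ _ Ht) as [w Ew].
    pose proof (game_tree_snoc (gT_tree A) _ _ Ht) as Ht'.
    now rewrite Ez, label_map_snoc, <- Ez, label_image, Ew, IH, last_last.
Qed.

Lemma in_image_firstn u k : in_image u -> in_image (firstn k u).
Proof.
  intros [s [Hs <-]]. destruct (le_lt_dec k (length s)).
  - exists (firstn k s). split; [now apply game_tree_firstn; [apply gT_tree|]|].
    now apply (proj1 Hg).
  - exists s. split; trivial. rewrite firstn_all2; trivial.
    rewrite (chronological_length (proj1 Hg)); trivial; lia.
Qed.

Lemma image_label_le_bound s : gT A s -> last (f s) 0 <= level_bound (length s).
Proof.
  intros Hs. destruct (game_tree_run_through (gT_tree A) s Hs) as [R [HR <-]].
  rewrite prefix_length. apply le_list_max, in_map_iff. eauto.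
Qed.

Lemma run_index_spec u : gT B u ->
  exists R, nth_error runsB (run_index u) = Some R /\ prefix R (length u) = u.
Proof.
  intros Hu. unfold run_index. apply epsilon_spec.
  destruct (game_tree_run_through (gT_tree B) u Hu) as [R [HR E]].
  destruct (In_nth_error _ _ (runsB_complete R HR)) as [i Hi]. eauto.
Qed.

Lemma run_index_inj u v : gT B u -> gT B v -> length u = length v -> run_index u = run_index v -> u = v.
Proof.
  intros Hu Hv Hlen E.
  destruct (run_index_spec u Hu) as [R [Ru Pu]], (run_index_spec v Hv) as [R' [Rv Pv]].
  rewrite E, Rv in Ru. injection Ru as ->. now rewrite <- Pu, <- Pv, Hlen.
Qed.

Lemma runs_prefix_unique R1 R2 m : Run (gT B) R1 -> Run (gT B) R2 -> N <= m ->
  prefix R1 m = prefix R2 m -> R1 = R2.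
Proof. intros H1 H2 Hm E. apply runsB_separated; trivial. exact (prefix_eq_le _ _ _ _ Hm E). Qed.

Lemma node_above_level_single_child u x y : N <= length u ->
  gT B (u ++ [x]) -> gT B (u ++ [y]) -> x = y.
Proof.
  intros Hu Hx Hy.
  destruct (game_tree_run_through (gT_tree B) _ Hx) as [R1 [HR1 P1]].
  destruct (game_tree_run_through (gT_tree B) _ Hy) as [R2 [HR2 P2]].
  rewrite length_app, Nat.add_1_r, prefix_S in P1, P2.
  apply app_inj_tail in P1 as [P1 <-], P2 as [P2 <-].
  now rewrite (runs_prefix_unique R1 R2 (length u)) by (trivial || congruence).
Qed.

Lemma label_fresh v : ~ in_image v -> in_image (removelast v) \/ length v <= N ->
  label v = level_bound (length v) + 1 + run_index v.
Proof.
  intros Hv Hfresh. unfold label.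
  destruct excluded_middle_informative; [contradiction|].
  destruct excluded_middle_informative; [reflexivity|contradiction].
Qed.

Lemma image_label_lt_fresh u x y : in_image (u ++ [x]) -> ~ in_image (u ++ [y]) ->
  label (u ++ [x]) < label (u ++ [y]).
Proof.
  intros Hx Hy.
  assert (Hu : in_image u).
  { rewrite <- (removelast_last u x), removelast_firstn_len. now apply in_image_firstn. }
  rewrite (label_fresh (u ++ [y])) by (rewrite ?removelast_last; auto).
  destruct Hx as [s [Hs Es]]. rewrite <- Es, label_image by trivial.
  assert (length (u ++ [y]) = length s) as ->.
  { rewrite <- (chronological_length (proj1 Hg) s Hs), Es, !length_app. reflexivity. }
  pose proof (image_label_le_bound s Hs). lia.
Qed.

Lemma label_sibling_inj u x y : gT B (u ++ [x]) -> gT B (u ++ [y]) ->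
  label (u ++ [x]) = label (u ++ [y]) -> x = y.
Proof.
  intros Hx Hy E. destruct (le_lt_dec N (length u)) as [Hdeep|Hlow].
  { exact (node_above_level_single_child u x y Hdeep Hx Hy). }
  destruct (classic (in_image (u ++ [x]))) as [Ix|Ix], (classic (in_image (u ++ [y]))) as [Iy|Iy].
  - destruct Ix as [a [Ha Ea]], Iy as [b [Hb Eb]].
    assert (a = b) as <-.
    { apply (proj1 (proj2 Hf)); trivial.
      now rewrite <- (label_map_extends a), <- (label_map_extends b), Ea, Eb, !label_map_snoc, E. }
    rewrite Ea in Eb. now apply app_inj_tail in Eb.
  - pose proof (image_label_lt_fresh u x y Ix Iy). lia.
  - pose proof (image_label_lt_fresh u y x Iy Ix). lia.
  - rewrite !label_fresh in E by (trivial; right; rewrite length_app; simpl; lia).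
    rewrite !length_app in E. simpl in E.
    assert (u ++ [x] = u ++ [y]) as Exy
      by (apply run_index_inj; trivial; [now rewrite !length_app | lia]).
    now apply app_inj_tail in Exy.
Qed.

Lemma label_above_level R n : Run (gT B) R -> N <= n -> ~ in_image (prefix R n) ->
  label (prefix R (S n)) = if excluded_middle_informative (gA B R) then 0 else 1.
Proof.
  intros HR Hn Hout. unfold label.
  destruct excluded_middle_informative as [Hin|_].
  { exfalso. apply Hout. rewrite <- (firstn_prefix R n (S n)) by lia. now apply in_image_firstn. }
  rewrite prefix_S, removelast_last, <- prefix_S, prefix_length.
  destruct excluded_middle_informative as [[Hin|Hle]|_]; [contradiction|lia|].
  destruct excluded_middle_informative as [[R' [HR' [E W]]]|Hlost];
    destruct excluded_middle_informative as [Hwin|Hlose]; trivial.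
  - exfalso. apply Hlose. now rewrite (runs_prefix_unique R R' (S n)) by (trivial || lia || congruence).
  - exfalso. apply Hlost. exists R. auto.
Qed.

Lemma label_map_wins_iff R Q : Run (gT B) R -> induced_run (label_map label) R Q -> (gA B R <-> c00 Q).
Proof.
  intros HR HRQ. destruct (classic (forall n, in_image (prefix R n))) as [Hin|Hout].
  - destruct (embedding_lift_run Hg R Hin) as [R' [HR' HR'R]].
    assert (HR'Q : induced_run f R' Q).
    { intros n. rewrite HRQ, HR'R. apply label_map_extends, HR'. }
    rewrite <- (embedding_wins_iff Hg R' R HR' HR'R). exact (embedding_wins_iff Hf R' Q HR' HR'Q).
  - apply not_all_ex_not in Hout as [n0 Hn0].
    assert (Hev : forall n, Nat.max n0 N <= n ->
      Q n = if excluded_middle_informative (gA B R) then 0 else 1).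
    { intros n Hn. rewrite (label_map_induced_run _ R Q HRQ). apply label_above_level; trivial; [lia|].
      intros Hin. apply Hn0. rewrite <- (firstn_prefix R n0 n) by lia. now apply in_image_firstn. }
    destruct excluded_middle_informative as [Hwin|Hlose]; split; intros W; try contradiction; trivial.
    + now exists (Nat.max n0 N).
    + destruct W as [K HK]. specialize (Hev (Nat.max K (Nat.max n0 N)) ltac:(lia)).
      rewrite HK in Hev by lia. discriminate.
Qed.

Lemma label_map_embedding : game_embedding B G_FL (label_map label).
Proof.
  split; [apply chronological_label_map|]. split.
  - apply (label_map_inj label (gT B) (gT_tree B)). exact label_sibling_inj.
  - split; split; try apply chronological_label_map; intros R Q HR HRQ;
      rewrite (label_map_wins_iff R Q HR HRQ); trivial.
Qed.

End Extension.

Theorem mainTheorem1 :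
  forall (A B : Game), finite_game A -> finite_game B ->
  forall (g : list (gM A) -> list (gM B)) (f : list (gM A) -> list (gM G_FL)),
    game_embedding A B g -> game_embedding A G_FL f ->
    exists h : list (gM B) -> list (gM G_FL),
      game_embedding B G_FL h /\
      forall t, gT A t -> h (g t) = f t.
Proof.
  intros A B finA finB g f Hg Hf.
  destruct (finite_game_runs A finA) as [runsA HA], (finite_game_runs B finB) as [runsB HB].
  destruct (prefix_separates_list runsB) as [N HN].
  exists (label_map (label A B g f runsA runsB N)). split.
  - apply label_map_embedding; auto.
  - intros t Ht. now apply label_map_extends.
Qed.
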